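(* Let $H$ be a Hilbert space, $K\subset H$ a compact set, $C\ge1$ and $n\in\mathbb N$. Then $$ e^{\rm cont}_{4n+1}(K,H)\le 2C\, e^{\rm non}_{n,C}(K,H). $$
   Context: A sequence $\mathcal B=\{h_1,h_2,\dots\}\subset H$ is a Riesz basis of $H$ if finite linear combinations are dense in $H$ and there are constants $0<A\le B$ with $A(\sum_k|\alpha_k|^2)^{1/2}\le\|\sum_k\alpha_kh_k\|_H\le B(\sum_k|\alpha_k|^2)^{1/2}$ for all finitely supported scalar sequences; $A,B$ denote the optimal such constants. For $C\ge1$, $\mathcal B_C$ is the set of Riesz bases of $H$ with $B/A\le C$. Best $n$-term approximation: $\sigma_n(u,\mathcal B)_H=\inf_{i_1,\dots,i_n}\inf_{c_1,\dots,c_n}\|u-\sum_{k=1}^nc_kh_{i_k}\|_H$. Define $e^{\rm non}_{n,C}(K,H)=\inf_{\mathcal B\in\mathcal B_C}\sup_{u\in K}\sigma_n(u,\mathcal B)_H$ and $e^{\rm cont}_n(K,H)=\inf_{N_n,\varphi_n}\sup_{u\in K}\|\varphi_n(N_n(u))-u\|_H$, where the infimum is over all continuous maps $N_n:K\to\mathbb R^n$ and $\varphi_n:\mathbb R^n\to H$. *)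

From HB Require Import structures.
From mathcomp Require Import all_boot all_order all_algebra.
From mathcomp Require Import all_classical all_reals all_analysis.
Set Implicit Arguments. Unset Strict Implicit. Unset Printing Implicit Defensive.
Import Order.TTheory GRing.Theory Num.Theory.
Import numFieldNormedType.Exports.
Local Open Scope classical_set_scope.
Local Open Scope ring_scope.

Section Defs.
Variable R : realType.

Definition inner_product_of_norm (V : normedModType R) (ip : V -> V -> R) :=
  [/\ (forall x y, ip x y = ip y x),
      (forall (a : R) (x y z : V), ip (a *: x + y) z = a * ip x z + ip y z)
    & (forall x : V, `|x| ^+ 2 = ip x x)].

Definition is_hilbert (V : completeNormedModType R) :=
  exists ip : V -> V -> R, inner_product_of_norm ip.

Definition lincomb (V : normedModType R) (h : nat -> V) (N : nat) (a : nat -> R) : V :=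
  \sum_(i < N) a i *: h i.
Definition l2norm (N : nat) (a : nat -> R) : R :=
  Num.sqrt (\sum_(i < N) a i ^+ 2).

Definition riesz_basis_with (V : normedModType R) (h : nat -> V) (A B : R) :=
  [/\ (forall (u : V) (eps : R), 0 < eps ->
         exists N a, `|u - lincomb h N a| < eps),
      0 < A, A <= B
    & (forall N a, A * l2norm N a <= `|lincomb h N a| /\
                   `|lincomb h N a| <= B * l2norm N a)].

Definition riesz_bases_C (V : normedModType R) (C : R) : set (nat -> V) :=
  [set h | exists A B, riesz_basis_with h A B /\ B <= C * A].

Definition sigma_n (V : normedModType R) (n : nat) (u : V) (h : nat -> V) : \bar R :=
  ereal_inf [set r | exists (idx : nat -> nat) (c : nat -> R),
              r = (`| u - \sum_(k < n) c k *: h (idx k) |)%:E].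

Definition e_non (V : normedModType R) (n : nat) (C : R) (K : set V) : \bar R :=
  ereal_inf [set ereal_sup [set sigma_n n u h | u in K] | h in @riesz_bases_C V C].

Definition e_cont (V : normedModType R) (n : nat) (K : set V) : \bar R :=
  ereal_inf [set r | exists (Nn : V -> 'rV[R]_n) (phi : 'rV[R]_n -> V),
              [/\ {within K, continuous Nn}, continuous phi &
                 r = ereal_sup [set (`| phi (Nn u) - u |)%:E | u in K]]].

End Defs.

From HB Require Import structures.
From mathcomp Require Import all_boot all_order all_algebra.
From mathcomp Require Import all_classical all_reals all_analysis.
From mathcomp Require Import lra ring zify.
Set Implicit Arguments.
Unset Strict Implicit.
Unset Printing Implicit Defensive.
Import Order.TTheory GRing.Theory Num.Theory.
Import numFieldNormedType.Exports.
Local Open Scope classical_set_scope.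
Local Open Scope ring_scope.

(* Fix a Riesz basis [h] with [B <= C A] and n-term error [e] on [K].  A
   partition of unity on a finite net of [K] gives continuous coefficient maps
   [x u] with [lincomb h M (x u)] close to [u].  By the lower Riesz bound, [x u]
   is l2-close to an n-sparse vector, so soft thresholding at a suitable level
   keeps at most [2n] coefficients and moves the combination by about [2 C e]
   (upper Riesz bound).  Two such thresholded vectors differ in at most [4n]
   places, so they are compared, through a Vandermonde system, by their first
   [4n+1] moments: the moment map is the continuous encoder, and the decoder
   glues the values at a finite net of its compact image with a partition of
   unity. *)

Section PartitionOfUnity.
Variable R : realType.

Lemma continuous_sum_ord (T : topologicalType) (W : normedModType R) (p : nat)
    (F : nat -> T -> W) :
  (forall i, continuous (F i)) -> continuous (fun x => \sum_(i < p) F i x).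
Proof.
move=> hF; elim: p => [|p IH] x.
  under eq_fun do rewrite big_ord0; exact: cvg_cst.
under eq_fun do rewrite big_ord_recr /=.
exact: (continuousD (IH x) (hF p x)).
Qed.

Variable X : normedModType R.

Definition tent (c : X) (r : R) (y : X) : R := Order.max 0 (2 * r - `|y - c|).

(* The denominator is at least [r], so it never vanishes; within distance [r]
   of some centre the sum of the tents exceeds [r], and the weights add up
   to [1] there. *)
Definition pou (p : nat) (cs : nat -> X) (r : R) (i : nat) (y : X) : R :=
  tent (cs i) r y / Order.max (\sum_(k < p) tent (cs k) r y) r.

Lemma tent_continuous c r : continuous (tent c r).
Proof.
move=> x; apply: (@continuous_max _ _ (fun=> 0) (fun y => 2 * r - `|y - c|)).
  exact: cvg_cst.
apply: continuousB; first exact: cvg_cst.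
apply: (continuous_comp (f := fun y => y - c)); last exact: norm_continuous.
by apply: continuousB; [exact: cvg_id | exact: cvg_cst].
Qed.

Lemma tent_ge0 c r y : 0 <= tent c r y.
Proof. by rewrite /tent le_max lexx. Qed.

Lemma pou_continuous p cs r i : 0 < r -> continuous (pou p cs r i).
Proof.
move=> r0 x.
have hsum : continuous (fun y => \sum_(k < p) tent (cs k) r y).
  exact: (@continuous_sum_ord X R^o p _ (fun k => @tent_continuous (cs k) r)).
pose den y := Order.max (\sum_(k < p) tent (cs k) r y) r.
have hden : {for x, continuous den}.
  exact: (continuous_max (hsum x) (cvg_cst _)).
have den_neq0 : den x != 0 by rewrite gt_eqF // lt_max r0 orbT.
exact (continuousM (@tent_continuous (cs i) r x)
  (@continuousV _ _ _ x den_neq0 hden)).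
Qed.

Lemma pou_ge0 p cs r i y : 0 < r -> 0 <= pou p cs r i y.
Proof. by move=> r0; rewrite divr_ge0 ?tent_ge0 // le_max (ltW r0) orbT. Qed.

Lemma pou_gt0_near {p cs r i y} : 0 < pou p cs r i y -> `|y - cs i| < 2 * r.
Proof.
move=> hpos; rewrite -subr_gt0 ltNge; apply/negP => h.
have tent0 : tent (cs i) r y = 0 by apply: max_l.
by move: hpos; rewrite /pou tent0 mul0r ltxx.
Qed.

Lemma pou_sum1 {p cs r y} : 0 < r -> (exists2 k, (k < p)%N & `|y - cs k| < r) ->
  \sum_(i < p) pou p cs r i y = 1.
Proof.
move=> r0 [k kp hk].
have r_lt_sum : r < \sum_(k < p) tent (cs k) r y.
  rewrite (bigD1 (Ordinal kp)) //=.
  have : 0 <= \sum_(i < p | i != Ordinal kp) tent (cs i) r y.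
    by apply: sumr_ge0 => j _; exact: tent_ge0.
  have : r < tent (cs k) r y by rewrite /tent lt_max; apply/orP; right; lra.
  lra.
rewrite /pou -mulr_suml (max_idPl (ltW r_lt_sum)) divff //.
by rewrite gt_eqF // (lt_trans r0 r_lt_sum).
Qed.

Lemma pou_combination_near (W : normedModType R) p cs r y (v : nat -> W) t D :
  0 < r -> (exists2 k, (k < p)%N & `|y - cs k| < r) ->
  (forall i, (i < p)%N -> `|y - cs i| < 2 * r -> `|v i - t| <= D) ->
  `|\sum_(i < p) pou p cs r i y *: v i - t| <= D.
Proof.
move=> r0 hk hD; have sum1 := pou_sum1 r0 hk.
have -> : t = \sum_(i < p) pou p cs r i y *: t.
  by rewrite -scaler_suml sum1 scale1r.
rewrite -sumrB; apply: (le_trans (ler_norm_sum _ _ _)).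
apply: (@le_trans _ _ (\sum_(i < p) pou p cs r i y * D)); last first.
  by rewrite -mulr_suml sum1 mul1r.
apply: ler_sum => i _; rewrite -scalerBr normrZ ger0_norm ?pou_ge0 //.
have := @pou_ge0 p cs r i y r0; rewrite le_eqVlt => /orP[/eqP <-|hp].
  by rewrite !mul0r.
by rewrite ler_pM2l // hD // (pou_gt0_near hp).
Qed.

End PartitionOfUnity.

Section Interpolation.
Variable R : realType.
Variables V W Y : normedModType R.

Lemma compact_finite_net {K : set V} {F : V -> W} {r : R} :
  compact K -> continuous F -> 0 < r ->
  exists p (cs : nat -> V), (forall i, (i < p)%N -> K (cs i)) /\
    forall u, K u -> exists2 i, (i < p)%N & `|F u - F (cs i)| < r.
Proof.
rewrite compact_cover => hK hF r0.
have [|u Ku|D' sD' cov] := hK V K (fun v => F @^-1` ball (F v) r).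
- move=> v _; apply: open_comp; first by move=> x _; exact: hF.
  exact: ball_open.
- by exists u => //=; exact: ballxx.
exists (size (finmap.enum_fset D')), (nth 0 (finmap.enum_fset D')); split.
  by move=> i ip; apply/set_mem/sD'; apply: mem_nth.
move=> u Ku; have [v Dv /= hv] := cov u Ku.
exists (index v (finmap.enum_fset D')); first by rewrite index_mem.
by rewrite nth_index //; move: hv; rewrite -ball_normE /ball_ /= distrC.
Qed.

(* Glue the values of [g] at a finite net of [f @` K] with a partition of
   unity. *)
Lemma lipschitz_factor_approx (K : set V) (f : V -> W) (g : V -> Y)
    (L del : R) :
  compact K -> continuous f -> 0 <= L -> 0 < del ->
  (forall u v, K u -> K v -> `|g u - g v| <= L * `|f u - f v|) ->
  exists2 phi : W -> Y, continuous phi &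
    forall u, K u -> `|phi (f u) - g u| <= del.
Proof.
move=> hK hf L0 del0 hL.
pose r := del / (2 * (L + 1)).
have r0 : 0 < r by rewrite divr_gt0 //; lra.
have [p [cs [csK cov]]] := compact_finite_net hK hf r0.
pose phi y := \sum_(i < p) pou p (f \o cs) r i y *: g (cs i).
exists phi.
  apply: (@continuous_sum_ord _ _ _ p
    (fun i y => pou p (f \o cs) r i y *: g (cs i))) => i y.
  exact: (continuousZr_tmp (@pou_continuous _ _ p (f \o cs) r i r0 y)).
move=> u Ku; rewrite /phi; have L2r : L * (2 * r) <= del.
  have -> : L * (2 * r) = del * (L / (L + 1)).
    by rewrite /r; field; rewrite gt_eqF //; lra.
  by apply: ler_piMr; [exact: ltW | rewrite ler_pdivrMr ?mul1r; lra].
apply: (le_trans _ L2r).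
apply: (@pou_combination_near _ _ _ p (f \o cs) r (f u) (g \o cs)) => //.
  by have [i ip hi] := cov u Ku; exists i.
move=> i ip hi; apply: (le_trans (hL _ _ (csK i ip) Ku)).
by apply: ler_wpM2l => //; rewrite distrC ltW.
Qed.

End Interpolation.

Section MomentInversion.
Variable R : realType.

Lemma ler_sum_term (I : finType) (F : I -> R) (i0 : I) :
  (forall i, 0 <= F i) -> F i0 <= \sum_i F i.
Proof. by move=> F0; rewrite (bigD1 i0) //= lerDl sumr_ge0. Qed.

Definition vanishing_poly (M : nat) (T : {set 'I_M}) (j0 : 'I_M) : {poly R} :=
  \prod_(j <- enum (T :\ j0)) ('X - (val j)%:R%:P).

(* [vanishing_poly T j0] recovers the coefficient [j0] of a vector supported in
   [T] from its moments; the constant bounds the resulting coefficient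
   functionals uniformly over all supports and indices. *)
Definition moment_inv_const (M m : nat) : R :=
  \sum_(T : {set 'I_M}) \sum_(j0 : 'I_M)
     (\sum_(i < m) `|(vanishing_poly T j0)`_i|) /
       `|(vanishing_poly T j0).[(val j0)%:R]|.

Lemma vanishing_poly_root M (T : {set 'I_M}) (j0 j : 'I_M) :
  j \in T -> j != j0 -> (vanishing_poly T j0).[(val j)%:R] = 0.
Proof.
move=> jT jj0; rewrite /vanishing_poly horner_prod.
apply/eqP/negPn/negP; rewrite prodf_seq_neq0 => /allP /(_ j).
by rewrite mem_enum in_setD1 jj0 jT hornerXsubC subrr eqxx => /(_ isT).
Qed.

Lemma vanishing_poly_neq0 M (T : {set 'I_M}) (j0 : 'I_M) :
  (vanishing_poly T j0).[(val j0)%:R] != 0.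
Proof.
rewrite /vanishing_poly horner_prod prodf_seq_neq0; apply/allP => j.
rewrite mem_enum in_setD1 => /andP[jj0 _] /=; rewrite hornerXsubC subr_eq0.
by rewrite eqr_nat; apply: contra jj0 => /eqP/val_inj ->.
Qed.

Lemma size_vanishing_poly M (T : {set 'I_M}) (j0 : 'I_M) :
  j0 \in T -> size (vanishing_poly T j0) = #|T|.
Proof. by move=> j0T; rewrite size_prod_XsubC -cardE (cardsD1 j0 T) j0T. Qed.

Lemma moment_inv_const_ge0 M m : 0 <= moment_inv_const M m.
Proof. by do 2!apply: sumr_ge0 => ? _; rewrite divr_ge0 ?sumr_ge0. Qed.

Lemma sum_coef_moments (M m : nat) (p : {poly R}) (w : nat -> R) :
  (size p <= m)%N ->
  \sum_(i < m) p`_i * (\sum_(j < M) w j * j%:R ^+ i) =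
  \sum_(j < M) w j * p.[j%:R].
Proof.
move=> pm; under eq_bigr do rewrite mulr_sumr.
rewrite exchange_big /=; apply: eq_bigr => j _.
rewrite (horner_coef_wide _ pm) mulr_sumr; apply: eq_bigr => i _.
by rewrite mulrCA.
Qed.

Lemma sparse_coef_le_moments (M m : nat) (w : nat -> R) (D : R) :
  0 <= D -> (#|[set j : 'I_M | w j != 0%R]%SET| <= m)%N ->
  (forall i, (i < m)%N -> `|\sum_(j < M) w j * j%:R ^+ i| <= D) ->
  forall j0 : 'I_M, `|w j0| <= moment_inv_const M m * D.
Proof.
move=> D0 card_supp moments_le j0.
set T := [set j : 'I_M | w j != 0%R]%SET.
have [->|wj0] := eqVneq (w j0) 0.
  by rewrite normr0 mulr_ge0 // moment_inv_const_ge0.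
have j0T : j0 \in T by rewrite inE.
set p := vanishing_poly T j0.
have recover : \sum_(i < m) p`_i * (\sum_(j < M) w j * j%:R ^+ i)
    = w j0 * p.[(val j0)%:R].
  have p_size : (size p <= m)%N by rewrite /p size_vanishing_poly.
  rewrite sum_coef_moments // (bigD1 j0) //=.
  rewrite big1 ?addr0 // => j jj0.
  have [->|wj] := eqVneq (w j) 0; first by rewrite mul0r.
  by rewrite vanishing_poly_root ?mulr0 // inE.
have p_j0 : 0 < `|p.[(val j0)%:R]| by rewrite normr_gt0 vanishing_poly_neq0.
have : `|w j0| * `|p.[(val j0)%:R]| <= (\sum_(i < m) `|p`_i|) * D.
  rewrite -normrM -recover; apply: (le_trans (ler_norm_sum _ _ _)).
  rewrite mulr_suml; apply: ler_sum => i _; rewrite normrM.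
  by apply: ler_wpM2l => //; apply: moments_le.
rewrite -ler_pdivlMr // mulrAC => /le_trans; apply; apply: ler_wpM2r => //.
pose F (S : {set 'I_M}) (j : 'I_M) :=
  (\sum_(i < m) `|(vanishing_poly S j)`_i|) /
    `|(vanishing_poly S j).[(val j)%:R]|.
have F0 S j : 0 <= F S j by rewrite divr_ge0 ?sumr_ge0.
apply: le_trans (@ler_sum_term _ (F T) j0 (F0 T)) _.
apply: (@ler_sum_term _ (fun S => \sum_j F S j)) => S.
exact: sumr_ge0.
Qed.

End MomentInversion.

Arguments moment_inv_const {R}.

Section SoftThresholding.
Variable R : realType.

Definition soft (tau t : R) : R := t - Order.max (- tau) (Order.min t tau).

Lemma soft_continuous tau : continuous (soft tau).
Proof.
move=> x.
have hmin : {for x, continuous (fun t : R => Order.min t tau)}.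
  exact: (@continuous_min _ _ id (fun=> tau) x cvg_id (cvg_cst _)).
have hmax : {for x, continuous (fun t => Order.max (- tau) (Order.min t tau))}.
  exact: (@continuous_max _ _ (fun=> - tau) _ x (cvg_cst _) hmin).
exact: (@continuousB _ R^o _ (fun t : R => t) _ x cvg_id hmax).
Qed.

Lemma soft_neq0 tau t : 0 <= tau -> soft tau t != 0 -> tau < `|t|.
Proof.
move=> tau0; apply: contraR; rewrite -leNgt ler_norml => /andP[h1 h2].
by rewrite /soft (min_l h2) (max_r h1) subrr.
Qed.

Lemma norm_sub_soft_le_tau tau t : 0 <= tau -> `|t - soft tau t| <= tau.
Proof.
move=> tau0; rewrite /soft opprB addrC subrK.
case: (leP t tau) => h1.
  case: (leP (- tau) t) => h2; first by rewrite ler_norml h1 h2.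
  by rewrite normrN ger0_norm.
by case: (leP (- tau) tau) => h2; [rewrite ger0_norm | lra].
Qed.

Lemma norm_sub_soft_le_norm tau t : 0 <= tau -> `|t - soft tau t| <= `|t|.
Proof.
move=> tau0; rewrite /soft opprB addrC subrK.
case: (leP t tau) => h1.
  case: (leP (- tau) t) => h2 //.
  by rewrite normrN ger0_norm // ler0_norm; lra.
by case: (leP (- tau) tau) => h2; rewrite !ger0_norm //; lra.
Qed.

Section Sparse.
Variables (M n : nat) (x c : nat -> R) (S : pred nat) (tau : R).
Hypotheses (tau0 : 0 < tau) (c_supp : forall j, ~~ S j -> c j = 0)
  (card_S : (#|[set j : 'I_M | S j]%SET| <= n)%N)
  (x_near_c : \sum_(j < M) (x j - c j) ^+ 2 <= n%:R * tau ^+ 2).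

(* Outside the support of [c], every large entry of [x] costs [tau ^+ 2] in
   the distance to [c]. *)
Lemma card_large_entries :
  (#|[set j : 'I_M | (tau < `|x j|)%R]%SET| <= n + n)%N.
Proof.
set L := [set j : 'I_M | tau < `|x j|]%SET; set S' := [set j : 'I_M | S j]%SET.
have -> : L = (L :&: S') :|: (L :\: S').
  by rewrite finset.setDE -finset.setIUr finset.setUCr finset.setIT.
apply: (leq_trans (leq_card_setU _ _)); apply: leq_add.
  by apply: leq_trans card_S; apply: subset_leq_card; exact: subsetIr.
rewrite -(ler_nat R) -(@ler_pM2r _ (tau ^+ 2)) ?exprn_gt0 //.
apply: le_trans x_near_c; rewrite mulr_natl -sumr_const.
apply: (@le_trans _ _ (\sum_(j in L :\: S') (x j - c j) ^+ 2)).
  apply: ler_sum => j; rewrite !inE => /andP[jS jL].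
  rewrite c_supp // subr0 -(real_normK (num_real (x j))).
  by rewrite lerXn2r ?nnegrE ?ltW // (lt_trans tau0).
rewrite [leRHS](bigID (mem (L :\: S'))) /= lerDl.
by apply: sumr_ge0 => j _; exact: sqr_ge0.
Qed.

(* On the support of [c] soft thresholding moves by at most [tau]; off it,
   by at most [|x j| = |x j - c j|]. *)
Lemma soft_threshold_sq_err :
  \sum_(j < M) (x j - soft tau (x j)) ^+ 2 <= (n + n)%:R * tau ^+ 2.
Proof.
have sq_le (a b : R) : `|a| <= b -> a ^+ 2 <= b ^+ 2.
  move=> ab; rewrite -(real_normK (num_real a)) lerXn2r ?nnegrE //.
  exact: le_trans ab.
rewrite (bigID (fun j : 'I_M => S j)) /= natrD mulrDl; apply: lerD.
  apply: (@le_trans _ _ (\sum_(j < M | S j) tau ^+ 2)).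
    by apply: ler_sum => j _; apply/sq_le/norm_sub_soft_le_tau/ltW.
  rewrite sumr_const -[tau ^+ 2 *+ _]mulr_natl ler_pM2r ?exprn_gt0 // ler_nat.
  by apply: leq_trans card_S; rewrite leq_eqVlt; apply/orP; left;
    apply/eqP/eq_card => j; rewrite !inE.
apply: le_trans x_near_c.
apply: (@le_trans _ _ (\sum_(j < M | ~~ S j) (x j - c j) ^+ 2)).
  apply: ler_sum => j hj.
  rewrite c_supp // subr0 -(real_normK (num_real (x j))).
  exact/sq_le/norm_sub_soft_le_norm/ltW.
rewrite [leRHS](bigID (fun j : 'I_M => ~~ S j)) /= lerDl.
by apply: sumr_ge0 => j _; exact: sqr_ge0.
Qed.

End Sparse.
End SoftThresholding.

Section RieszBasis.
Variable R : realType.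
Variable V : normedModType R.
Implicit Types (h : nat -> V) (a b c x : nat -> R) (idx : nat -> nat).

Lemma lincomb_widen h M N a : (M <= N)%N ->
  lincomb h N (fun j => if (j < M)%N then a j else 0) = lincomb h M a.
Proof.
move=> MN; rewrite /lincomb (big_ord_widen N (fun j => a j *: h j)) //.
by rewrite [RHS]big_mkcond; apply: eq_bigr => j _; case: ifP; rewrite ?scale0r.
Qed.

Lemma lincombB h M a b :
  lincomb h M a - lincomb h M b = lincomb h M (fun j => a j - b j).
Proof. by rewrite /lincomb -sumrB; apply: eq_bigr => j _; rewrite scalerBl. Qed.

Lemma ler_sum_ord_widen (M N : nat) (F : nat -> R) : (M <= N)%N ->
  (forall j, 0 <= F j) -> \sum_(j < M) F j <= \sum_(j < N) F j.
Proof.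
move=> MN F0; rewrite (big_ord_widen N F MN) big_mkcond /=.
by apply: ler_sum => j _; case: ifP.
Qed.

(* Indices of an n-term combination may repeat; their coefficients add up. *)
Definition scatter (n : nat) (idx : nat -> nat) (c : nat -> R) (j : nat) : R :=
  \sum_(k < n) (if idx k == j then c k else 0).

Lemma lincomb_scatter h n idx c N : (forall k, (k < n)%N -> (idx k < N)%N) ->
  lincomb h N (scatter n idx c) = \sum_(k < n) c k *: h (idx k).
Proof.
move=> idxN; rewrite /lincomb /scatter.
under eq_bigr do rewrite scaler_suml.
rewrite exchange_big /=; apply: eq_bigr => k _.
rewrite (bigD1 (Ordinal (idxN k (ltn_ord k)))) //= eqxx big1 ?addr0 // => j jk.
case: eqP => [idx_j|_]; last by rewrite scale0r.
by move: jk; rewrite -val_eqE /= idx_j eqxx.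
Qed.

Lemma scatter_out n idx c j : ~~ [exists k : 'I_n, idx k == j] ->
  scatter n idx c j = 0.
Proof.
by move=> /existsPn idx_j; rewrite /scatter big1 // => k _; rewrite ifN.
Qed.

Lemma card_scatter_supp n (idx : nat -> nat) M :
  (#|[set j : 'I_M | [exists k : 'I_n, idx k == val j]]%SET| <= n)%N.
Proof.
set A := [set j : 'I_M | _]%SET.
have [->|[j0 _]] := set_0Vmem A; first by rewrite cards0.
pose f (k : 'I_n) : 'I_M := insubd j0 (idx k).
apply: (@leq_trans #|f @: [set: 'I_n]|%SET); last first.
  by apply: (leq_trans (leq_imset_card _ _)); rewrite cardsT card_ord.
apply: subset_leq_card; apply/fintype.subsetP => j.
rewrite inE => /existsP[k /eqP idx_k]; apply/imsetP; exists k; rewrite ?inE //.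
by apply: val_inj; rewrite /f insubdK idx_k //; exact: ltn_ord.
Qed.

Lemma riesz_coef_near_scatter h A M x n idx c d :
  0 < A -> (forall N a, A * l2norm N a <= `|lincomb h N a|) ->
  `|lincomb h M x - \sum_(k < n) c k *: h (idx k)| <= d ->
  \sum_(j < M) (x j - scatter n idx c j) ^+ 2 <= (d / A) ^+ 2.
Proof.
move=> A0 lower near.
set N := maxn M (\max_(k < n) (idx k).+1).
have MN : (M <= N)%N by rewrite leq_maxl.
have idxN k : (k < n)%N -> (idx k < N)%N.
  move=> kn; rewrite leq_max; apply/orP; right.
  exact: (@leq_bigmax _ (fun k : 'I_n => (idx k).+1) (Ordinal kn)).
pose X j := if (j < M)%N then x j else 0.
pose y j := X j - scatter n idx c j.
have sq_ge0 j : 0 <= y j ^+ 2 by exact: sqr_ge0.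
have : A * l2norm N y <= d.
  apply: le_trans (lower N y) _.
  by rewrite -lincombB lincomb_widen // lincomb_scatter.
rewrite -ler_pdivlMl // mulrC /l2norm => le_sqrt.
have -> : \sum_(j < M) (x j - scatter n idx c j) ^+ 2 = \sum_(j < M) y j ^+ 2.
  by apply: eq_bigr => j _; rewrite /y /X ltn_ord.
apply: le_trans (ler_sum_ord_widen MN sq_ge0) _.
have sumN_ge0 : 0 <= \sum_(j < N) y j ^+ 2 by apply: sumr_ge0.
rewrite -(sqr_sqrtr sumN_ge0) lerXn2r ?nnegrE //.
exact: le_trans (sqrtr_ge0 _) le_sqrt.
Qed.

Lemma riesz_dist_le_l2 h B M a b s :
  (forall N a, `|lincomb h N a| <= B * l2norm N a) -> 0 <= B -> 0 <= s ->
  \sum_(j < M) (a j - b j) ^+ 2 <= s ^+ 2 ->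
  `|lincomb h M a - lincomb h M b| <= B * s.
Proof.
move=> upper B0 s0 sum_le; rewrite lincombB; apply: le_trans (upper _ _) _.
apply: ler_wpM2l => //; rewrite /l2norm -(ger0_norm s0) -sqrtr_sqr.
by rewrite ler_sqrt ?sqr_ge0.
Qed.

(* The sharp factor is [sqrt 2]; [2] avoids square roots. *)
Lemma riesz_soft_threshold h A B C M x n idx c d :
  riesz_basis_with h A B -> B <= C * A -> (0 < n)%N -> 0 < d ->
  `|lincomb h M x - \sum_(k < n) c k *: h (idx k)| <= d ->
  let tau := d / (A * Num.sqrt n%:R) in
  (#|[set j : 'I_M | (tau < `|x j|)%R]%SET| <= n + n)%N /\
  `|lincomb h M (fun j => soft tau (x j)) - lincomb h M x| <= 2 * C * d.
Proof.
case=> _ A0 AB riesz BCA n0 d0 near tau.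
have sqrt_n0 : 0 < Num.sqrt (n%:R : R) by rewrite sqrtr_gt0 ltr0n.
have tau0 : 0 < tau by rewrite divr_gt0 // mulr_gt0.
have dA_tau : (d / A) ^+ 2 = n%:R * tau ^+ 2.
  rewrite /tau !expr_div_n exprMn sqr_sqrtr ?ler0n //.
  by field; rewrite pnatr_eq0 -lt0n n0 gt_eqF.
have := riesz_coef_near_scatter A0 (fun N a => proj1 (riesz N a)) near.
rewrite dA_tau => coef_near.
pose S j := [exists k : 'I_n, idx k == j].
have c_supp j : ~~ S j -> scatter n idx c j = 0 by exact: scatter_out.
have card_S : (#|[set j : 'I_M | S j]%SET| <= n)%N := card_scatter_supp n idx M.
split; first exact: (card_large_entries tau0 c_supp card_S coef_near).
have q0 : 0 <= 2 * d / A by rewrite divr_ge0 ?mulr_ge0 ?(ltW A0) ?(ltW d0).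
rewrite distrC; apply: le_trans (_ : B * (2 * d / A) <= _); last first.
  apply: le_trans (ler_wpM2r q0 BCA) _.
  by rewrite (_ : C * A * (2 * d / A) = 2 * C * d) //; field; rewrite gt_eqF.
apply: riesz_dist_le_l2 => //; first by move=> N a; case: (riesz N a).
  exact: le_trans (ltW A0) AB.
apply: le_trans (soft_threshold_sq_err tau0 c_supp card_S coef_near) _.
rewrite natrD mulrDl -dA_tau !expr_div_n exprMn.
have : 0 <= d ^+ 2 / A ^+ 2 by rewrite divr_ge0 ?sqr_ge0.
rewrite -!mulrA; lra.
Qed.

End RieszBasis.

Section Encoding.
Variable R : realType.
Variable V : normedModType R.
Implicit Types (h : nat -> V) (a b x : nat -> R).

Lemma continuous_coef_approx h (K : set V) (rho : R) :
  compact K -> 0 < rho ->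
  (forall u eps, 0 < eps -> exists N a, `|u - lincomb h N a| < eps) ->
  exists M (x : V -> nat -> R), (forall j, continuous (x^~ j)) /\
    forall u, K u -> `|lincomb h M (x u) - u| <= 3 * rho.
Proof.
move=> hK rho0 dense.
have [p [cs [csK cov]]] :=
  compact_finite_net hK (fun v => @cvg_id _ (nbhs v)) rho0.
have approx i :
    exists Na : nat * (nat -> R), `|cs i - lincomb h Na.1 Na.2| < rho.
  by have [N [a ha]] := dense (cs i) rho rho0; exists (N, a).
have [Na hNa] := choice approx.
pose M := (\max_(i < p) (Na i).1)%N.
pose a i j := if (j < (Na i).1)%N then (Na i).2 j else 0.
have a_widen i : (i < p)%N -> lincomb h M (a i) = lincomb h (Na i).1 (Na i).2.
  move=> ip; apply: lincomb_widen.
  exact: (@leq_bigmax _ (fun i : 'I_p => (Na i).1) (Ordinal ip)).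
exists M, (fun u j => \sum_(i < p) pou p cs rho i u * a i j); split.
  move=> j; apply: (@continuous_sum_ord _ _ R^o p
    (fun i u => pou p cs rho i u * a i j)) => i u.
  exact: (continuousM (@pou_continuous _ _ p cs rho i rho0 u) (cvg_cst _)).
move=> u Ku.
have -> : lincomb h M (fun j => \sum_(i < p) pou p cs rho i u * a i j) =
    \sum_(i < p) pou p cs rho i u *: lincomb h M (a i).
  rewrite /lincomb; under eq_bigr do rewrite scaler_suml.
  rewrite exchange_big /=; apply: eq_bigr => i _.
  by rewrite scaler_sumr; apply: eq_bigr => j _; rewrite scalerA.
apply: (@pou_combination_near _ _ _ p cs rho u (fun i => lincomb h M (a i))).
- exact: rho0.
- by have [i ip hi] := cov u Ku; exists i.
move=> i ip hi; rewrite a_widen //.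
apply: le_trans (ler_distD (cs i) _ _) _.
rewrite distrC [`|cs i - u|]distrC; have := hNa i; lra.
Qed.

Definition moment_vec (m j : nat) : 'rV[R]_m := \row_(i < m) j%:R ^+ i.

Definition moments (m M : nat) a : 'rV[R]_m :=
  \sum_(j < M) a j *: moment_vec m j.

Lemma moments_continuous (T : topologicalType) (m M : nat) (a : T -> nat -> R) :
  (forall j, continuous (a^~ j)) -> continuous (fun t => moments m M (a t)).
Proof.
move=> a_cont.
apply: (@continuous_sum_ord _ _ _ M (fun j t => a t j *: moment_vec m j)).
by move=> j t; exact: continuousZr_tmp (a_cont j t).
Qed.

Lemma normr_mx_entry_le (m : nat) (y : 'rV[R]_m) (i : 'I_m) :
  `|y ord0 i| <= `|y|.
Proof. by rewrite [leRHS]mx_normrE; exact: (le_bigmax _ _ (ord0, i)). Qed.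

Lemma lincomb_dist_le_moments h (m M : nat) a b :
  (#|[set j : 'I_M | a j != b j]%SET| <= m)%N ->
  `|lincomb h M a - lincomb h M b| <=
    moment_inv_const M m * (\sum_(j < M) `|h j|) *
    `|moments m M a - moments m M b|.
Proof.
move=> card_diff; set D := `|moments m M a - moments m M b|.
have coef_le : forall j0 : 'I_M, `|a j0 - b j0| <= moment_inv_const M m * D.
  apply: (@sparse_coef_le_moments _ M m (fun j => a j - b j)) => [||i im].
  - exact: normr_ge0.
  - apply: leq_trans card_diff; apply: subset_leq_card.
    by apply/fintype.subsetP => j; rewrite !inE subr_eq0.
  have -> : \sum_(j < M) (a j - b j) * j%:R ^+ i =
      (moments m M a - moments m M b) ord0 (Ordinal im).
    by rewrite !mxE !summxE -sumrB; apply: eq_bigr => j _; rewrite !mxE mulrBl.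
  exact: normr_mx_entry_le.
rewrite lincombB /lincomb mulrAC mulr_sumr.
apply: le_trans (ler_norm_sum _ _ _) _.
by apply: ler_sum => j _; rewrite normrZ ler_wpM2r.
Qed.

Lemma card_soft_neq (M : nat) (tau : R) a b : 0 <= tau ->
  (#|[set j : 'I_M | soft tau (a j) != soft tau (b j)]%SET| <=
   #|[set j : 'I_M | (tau < `|a j|)%R]%SET| +
   #|[set j : 'I_M | (tau < `|b j|)%R]%SET|)%N.
Proof.
move=> tau0; apply: leq_trans (leq_card_setU _ _).
apply: subset_leq_card; apply/fintype.subsetP => j; rewrite !inE => neq.
have [a0|/(soft_neq0 tau0) -> //] := eqVneq (soft tau (a j)) 0.
by apply/orP; right; apply: (soft_neq0 tau0); rewrite -a0 eq_sym.
Qed.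

End Encoding.

Section Widths.
Variable R : realType.
Variable V : normedModType R.

Lemma sparse_encode_decode (h : nat -> V) A B C (K : set V) n (e del : R) :
  riesz_basis_with h A B -> B <= C * A -> 1 <= C -> compact K -> (0 < n)%N ->
  0 <= e -> 0 < del ->
  (forall u, K u -> exists (idx : nat -> nat) (c : nat -> R),
     `|u - \sum_(k < n) c k *: h (idx k)| <= e) ->
  exists (Nn : V -> 'rV[R]_(4 * n + 1)) (phi : 'rV[R]_(4 * n + 1) -> V),
    [/\ continuous Nn, continuous phi &
      forall u, K u -> `|phi (Nn u) - u| <= 2 * C * e + del].
Proof.
move=> hrb BCA C1 hK n0 e0 del0 nterm.
have [dense A0 AB _] := hrb.
pose rho := del / (12 * C + 6).
have rho0 : 0 < rho by rewrite divr_gt0 //; lra.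
have [M [x [x_cont x_near]]] := continuous_coef_approx hK rho0 dense.
pose d := e + 3 * rho.
have d0 : 0 < d by rewrite /d; lra.
pose tau := d / (A * Num.sqrt n%:R).
have tau0 : 0 <= tau.
  by rewrite divr_ge0 ?mulr_ge0 ?sqrtr_ge0 ?(ltW d0) ?(ltW A0).
pose th u j := soft tau (x u j).
have thresh u : K u ->
    (#|[set j : 'I_M | (tau < `|x u j|)%R]%SET| <= n + n)%N /\
    `|lincomb h M (th u) - lincomb h M (x u)| <= 2 * C * d.
  move=> Ku; have [idx [c near]] := nterm u Ku.
  have near_x : `|lincomb h M (x u) - \sum_(k < n) c k *: h (idx k)| <= d.
    apply: le_trans (ler_distD u _ _) _; rewrite /d addrC.
    by apply: lerD; [exact: near | exact: x_near].
  exact (@riesz_soft_threshold _ _ h A B C M _ n idx c d hrb BCA n0 d0 near_x).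
pose f u := moments (4 * n + 1) M (th u).
have f_cont : continuous f.
  apply: moments_continuous => j u.
  exact: (continuous_comp (x_cont j u) (@soft_continuous _ tau (x u j))).
pose Lam := moment_inv_const M (4 * n + 1) * \sum_(j < M) `|h j|.
have Lam0 : 0 <= Lam by rewrite mulr_ge0 ?moment_inv_const_ge0 ?sumr_ge0.
have lip u v : K u -> K v ->
    `|lincomb h M (th u) - lincomb h M (th v)| <= Lam * `|f u - f v|.
  move=> Ku Kv; apply: lincomb_dist_le_moments.
  apply: leq_trans (card_soft_neq M (x u) (x v) tau0) _.
  have := (thresh u Ku).1; have := (thresh v Kv).1; lia.
have [phi phi_cont phi_near] :=
  lipschitz_factor_approx hK f_cont Lam0 (divr_gt0 del0 (ltr0n _ 2)) lip.
exists f, phi; split => // u Ku.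
have rho_del : rho * (12 * C + 6) = del.
  by rewrite /rho mulrVK // unitfE gt_eqF //; lra.
have := ler_distD (lincomb h M (x u)) (phi (f u)) u.
have := ler_distD (lincomb h M (th u)) (phi (f u)) (lincomb h M (x u)).
have := phi_near u Ku; have := (thresh u Ku).2; have := x_near u Ku.
rewrite /d; nra.
Qed.

Lemma e_cont_le_approx (m : nat) (K : set V) (a : R) :
  (forall del, 0 < del -> exists (Nn : V -> 'rV[R]_m) (phi : 'rV[R]_m -> V),
    [/\ continuous Nn, continuous phi &
      forall u, K u -> `|phi (Nn u) - u| <= a + del]) ->
  (e_cont m K <= a%:E)%E.
Proof.
move=> approx; apply/lee_addgt0Pr => del del0.
have [Nn [phi [Nn_cont phi_cont err]]] := approx del del0.
apply: le_trans (ereal_inf_lbound _) _.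
  by exists Nn, phi; split => //; exact: continuous_subspaceT.
by apply: ge_ereal_sup => _ [u Ku <-]; rewrite lee_fin err.
Qed.

Lemma e_cont_set0 (m : nat) (K : set V) :
  (forall u, ~ K u) -> e_cont m K = -oo%E.
Proof.
move=> K0; apply/eqP; rewrite -leeNy_eq.
apply: le_trans (ereal_inf_lbound _) _.
  exists (fun=> 0), (fun=> 0); split => //; last exact: cst_continuous.
  by apply: continuous_subspaceT => x; exact: cvg_cst.
by apply: ge_ereal_sup => y [u Ku _]; case: (K0 _ Ku).
Qed.

Lemma e_cont_le_nterm (h : nat -> V) A B C (K : set V) n (s : R) :
  riesz_basis_with h A B -> B <= C * A -> 1 <= C -> compact K -> 0 <= s ->
  (forall eta, 0 < eta -> forall u, K u ->
     exists (idx : nat -> nat) (c : nat -> R),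
       `|u - \sum_(k < n) c k *: h (idx k)| <= s + eta) ->
  (e_cont (4 * n + 1) K <= (2 * C * s)%:E)%E.
Proof.
move=> hrb BCA C1 hK s0 nterm; apply: e_cont_le_approx => del del0.
have [n0|n0] := posnP n.
  exists (fun=> 0), (fun=> 0).
  split; [exact: cst_continuous | exact: cst_continuous |].
  move=> u Ku; have [idx [c]] := nterm del del0 u Ku.
  rewrite n0 big_ord0 subr0 sub0r normrN => u_le.
  by apply: le_trans u_le _; rewrite lerD2r ler_peMl //; lra.
have eta0 : 0 < del / (4 * C) by rewrite divr_gt0 //; lra.
have [Nn [phi [Nn_cont phi_cont err]]] := sparse_encode_decode hrb BCA C1 hK n0
  (addr_ge0 s0 (ltW eta0)) (divr_gt0 del0 (ltr0n _ 2)) (nterm _ eta0).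
exists Nn, phi; split => // u Ku; apply: le_trans (err u Ku) _.
rewrite le_eqVlt; apply/orP; left; apply/eqP; field; lra.
Qed.

Lemma sigma_n_ge0 n (u : V) (h : nat -> V) : (0 <= sigma_n n u h)%E.
Proof. by apply: le_ereal_inf_tmp => _ [idx [c ->]]; rewrite lee_fin. Qed.

Lemma sigma_n_lt n (u : V) (h : nat -> V) (r : R) : (sigma_n n u h < r%:E)%E ->
  exists (idx : nat -> nat) (c : nat -> R),
    `|u - \sum_(k < n) c k *: h (idx k)| < r.
Proof.
by move=> /ereal_inf_lt[_ [idx [c ->]]]; rewrite lte_fin; exists idx, c.
Qed.

End Widths.

Theorem proposition1 (R : realType) (V : completeNormedModType R)
    (hV : is_hilbert V) (K : set V) (hK : compact K) (C : R) (hC : 1 <= C)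
    (n : nat) :
  (e_cont (4 * n + 1)%N K <= (2 * C)%:E * e_non n C K)%E.
Proof.
have C0 : 0 < 2 * C by lra.
rewrite -lee_pdivrMl //; apply: le_ereal_inf_tmp => _ [h [A [B [hrb BCA]]] <-].
rewrite lee_pdivrMl //.
have [[u0 Ku0]|K0] := pselect (exists u, K u); last first.
  by rewrite e_cont_set0 ?leNye // => u Ku; apply: K0; exists u.
set sup_sigma := ereal_sup _.
have sigma_le u : K u -> (sigma_n n u h <= sup_sigma)%E.
  by move=> Ku; apply: ereal_sup_ubound; exists u.
have := le_trans (sigma_n_ge0 n u0 h) (sigma_le u0 Ku0).
case: sup_sigma sigma_le => [s| |] sigma_le // s0; last first.
  by rewrite gt0_muley ?lte_fin // leey.
rewrite -EFinM; apply: (e_cont_le_nterm hrb BCA hC hK).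
  by rewrite -lee_fin.
move=> eta eta0 u Ku.
have lt_s_eta : (sigma_n n u h < (s + eta)%:E)%E.
  by apply: le_lt_trans (sigma_le u Ku) _; rewrite lte_fin ltrDl.
have [idx [c near]] := sigma_n_lt lt_s_eta.
by exists idx, c; exact: ltW.
Qed.
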